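(* Let $X$ be a Tychonoff space which is a finite union $X=X_1\cup\dots\cup X_k$ of closed subsets $X_i$, each of which is a $\Delta$-space. Then $X$ is a $\Delta$-space. In particular, a finite union of compact $\Delta$-subspaces of a Hausdorff space is a $\Delta$-space.
   Context: A topological space $X$ is a $\Delta$-space if for every decreasing sequence $\{D_n:n\in\omega\}$ of subsets of $X$ with $\bigcap_n D_n=\emptyset$ there is a decreasing sequence $\{V_n:n\in\omega\}$ of open subsets of $X$ with $D_n\subseteq V_n$ for all $n$ and $\bigcap_n V_n=\emptyset$. *)

From HB Require Import structures.
From mathcomp Require Import all_boot all_order all_algebra.
From mathcomp Require Import all_classical all_reals all_analysis.
Set Implicit Arguments. Unset Strict Implicit. Unset Printing Implicit Defensive.
Local Open Scope classical_set_scope.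

Definition decreasing_sets {T : Type} (D : nat -> set T) : Prop :=
  forall n, D n.+1 `<=` D n.

Definition tychonoff_space (T : topologicalType) : Prop :=
  completely_regular_space T /\ accessible_space T.

Definition delta_space (T : topologicalType) : Prop :=
  forall D : nat -> set T, decreasing_sets D -> \bigcap_n D n = set0 ->
    exists V : nat -> set T,
      [/\ forall n, open (V n), decreasing_sets V,
          forall n, D n `<=` V n & \bigcap_n V n = set0].

(* The subset A of T, with the subspace topology, is a Delta-space:
   the definition of delta_space with "open in A" unfolded as
   "of the form A `&` U with U open in T". *)
Definition delta_subspace (T : topologicalType) (A : set T) : Prop :=
  forall D : nat -> set T, (forall n, D n `<=` A) ->
    decreasing_sets D -> \bigcap_n D n = set0 ->
    exists V : nat -> set T,
      [/\ forall n, exists U, open U /\ V n = A `&` U, decreasing_sets V,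
          forall n, D n `<=` V n & \bigcap_n V n = set0].

From mathcomp Require Import all_boot all_order all_algebra.
From mathcomp Require Import all_classical all_reals all_analysis.
Local Open Scope classical_set_scope.

(* Let D be a decreasing sequence with empty intersection.  For a closed
   Delta-subspace A, apply the Delta-property of A to the traces D n `&` A:
   this yields open sets U n with D n `&` A `<=` A `&` U n, decreasing in A
   and with empty intersection inside A. *)

Lemma open_finI (T : topologicalType) (J : finType) (F : J -> set T) :
  (forall i, open (F i)) -> open [set x | forall i, F i x].
Proof.
move=> oF; rewrite openE => x Fx.
exact: (@filter_forall T J F (nbhs x) _
   (fun i => open_nbhs_nbhs (conj (oF i) (Fx i)))).
Qed.

Definition envelope_avoiding {T : topologicalType} (A : set T)
    (D W : nat -> set T) : Prop :=
  [/\ forall n, open (W n), decreasing_sets W, forall n, D n `<=` W n &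
      forall x, A x -> ~ (forall n, W n x)].

Lemma trace_decreasing_empty {T : Type} (A : set T) {D : nat -> set T} :
  decreasing_sets D -> \bigcap_n D n = set0 ->
  decreasing_sets (fun n => D n `&` A) /\ \bigcap_n (D n `&` A) = set0.
Proof.
move=> dD D0; split; first by move=> n x [Dx Ax]; split => //; apply: dD.
apply/seteqP; split => // x /= Dx.
have : (\bigcap_n D n) x by move=> n _; case: (Dx n I).
by rewrite D0.
Qed.

Lemma closed_delta_subspace_envelope {T : topologicalType} {A : set T}
    {D : nat -> set T} :
  closed A -> delta_subspace A -> decreasing_sets D -> \bigcap_n D n = set0 ->
  exists W, envelope_avoiding A D W.
Proof.
move=> cA dA dD D0.
have [dDA DA0] := trace_decreasing_empty A dD D0.
have [V [oV dV sV V0]] := dA _ (fun n x (Dx : (D n `&` A) x) => Dx.2) dDA DA0.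
exists (fun n => V n `|` ~` A); split.
- move=> n; have [U [oU ->]] := oV n.
  have -> : A `&` U `|` ~` A = U `|` ~` A.
    by rewrite setUIl setUCr setTI.
  by apply: openU => //; rewrite openC.
- by move=> n x [Vx|nAx]; [left; apply: dV|right].
- move=> n x Dx; have [Ax|nAx] := pselect (A x); last by right.
  by left; apply: sV.
- move=> x Ax Wx.
  have : (\bigcap_n V n) x by move=> n _; case: (Wx n).
  by rewrite V0.
Qed.

Lemma finite_closed_cover_envelope {T : topologicalType} {J : finType}
    {X : J -> set T} {D : nat -> set T} :
  (forall i, closed (X i)) -> (forall i, delta_subspace (X i)) ->
  decreasing_sets D -> \bigcap_n D n = set0 ->
  exists W, envelope_avoiding (\bigcup_i X i) D W.
Proof.
move=> cX dX dD D0.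
have [V HV] := choice (fun i => closed_delta_subspace_envelope (cX i) (dX i) dD D0).
exists (fun n => [set x | forall i, V i n x]); split.
- by move=> n; apply: open_finI => i; have [oV _ _ _] := HV i.
- by move=> n x Vx i; have [_ dV _ _] := HV i; apply: dV.
- by move=> n x Dx i; have [_ _ sV _] := HV i; apply: sV.
- move=> x [i _ Xx] Wx; have [_ _ _ eV] := HV i.
  by apply: (eV x Xx) => n; apply: Wx.
Qed.

Lemma delta_space_finite_closed_cover {T : topologicalType} {J : finType}
    {X : J -> set T} :
  (forall i, closed (X i)) -> (forall i, delta_subspace (X i)) ->
  \bigcup_i X i = setT -> delta_space T.
Proof.
move=> cX dX cov D dD D0.
have [W [oW dW sW eW]] := finite_closed_cover_envelope cX dX dD D0.
exists W; split => //; apply/seteqP; split => // x Wx.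
by exfalso; apply: (eW x); [rewrite cov | move=> n; apply: Wx].
Qed.

Lemma delta_subspace_finite_closed_union {T : topologicalType} {J : finType}
    {X : J -> set T} :
  (forall i, closed (X i)) -> (forall i, delta_subspace (X i)) ->
  delta_subspace (\bigcup_i X i).
Proof.
move=> cX dX D sD dD D0.
have [W [oW dW sW eW]] := finite_closed_cover_envelope cX dX dD D0.
exists (fun n => (\bigcup_i X i) `&` W n); split.
- by move=> n; exists (W n).
- by move=> n x [Ax Wx]; split => //; apply: dW.
- move=> n x Dx; exact: (conj (sD n x Dx) (sW n x Dx)).
- apply/seteqP; split => // x Wx; have [Ax _] := Wx 0 I.
  by exfalso; apply: (eW x Ax) => n; case: (Wx n I).
Qed.

Theorem proposition5p4 :
  (forall (T : topologicalType) (k : nat) (X : 'I_k -> set T),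
      tychonoff_space T ->
      (forall i, closed (X i)) ->
      (forall i, delta_subspace (X i)) ->
      \bigcup_i X i = setT ->
      delta_space T)
  /\
  (forall (T : topologicalType) (k : nat) (X : 'I_k -> set T),
      hausdorff_space T ->
      (forall i, compact (X i)) ->
      (forall i, delta_subspace (X i)) ->
      delta_subspace (\bigcup_i X i)).
Proof.
split=> [T k X _ cX dX cov | T k X hT cX dX].
- exact: delta_space_finite_closed_cover cX dX cov.
- apply: delta_subspace_finite_closed_union dX => i.
  exact: compact_closed hT (cX i).
Qed.
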